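(* $D(18,\{3,4\})\le 33$; equivalently, there exists a $\{K_3,K_4\}$-decomposition of $K_{18}$ with $\alpha\le 15$ (indeed one with $15$ copies of $K_3$ and $18$ copies of $K_4$).
   Context: A $\{K_3,K_4\}$-decomposition of $K_v$ is a collection of subgraphs, each isomorphic to $K_3$ or $K_4$, such that every edge of $K_v$ lies in exactly one of them. In such a decomposition $\alpha$ and $\beta$ denote the numbers of copies of $K_3$ and $K_4$; since $3\alpha+6\beta=\binom{v}{2}$, minimizing $\alpha+\beta$ is equivalent to minimizing $\alpha$. $D(v,\{3,4\})$ is the minimum of $\alpha+\beta$ over all such decompositions of $K_v$. *)

From mathcomp Require Import all_boot.
Set Implicit Arguments. Unset Strict Implicit. Unset Printing Implicit Defensive.

(* K_v has vertex set 'I_v.  A copy of K_3 / K_4 inside K_v is determined by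
   its vertex set, a 3- or 4-element subset of 'I_v. *)
Definition is_K34_decomposition (v : nat) (B : seq {set 'I_v}) : Prop :=
  (forall b, b \in B -> #|b| = 3 \/ #|b| = 4) /\
  (forall x y : 'I_v, x != y ->
     count (fun b : {set 'I_v} => (x \in b) && (y \in b)) B = 1).

Definition alpha (v : nat) (B : seq {set 'I_v}) : nat :=
  count (fun b : {set 'I_v} => #|b| == 3) B.
Definition beta (v : nat) (B : seq {set 'I_v}) : nat :=
  count (fun b : {set 'I_v} => #|b| == 4) B.

Definition D_le (v n : nat) : Prop :=
  exists B : seq {set 'I_v}, is_K34_decomposition B /\ alpha B + beta B <= n.

(** The decomposition is an explicit design: 15 triples and 18 quadruples of
    vertices of [K_18] such that every pair of vertices lies in exactly one of
    them (consistent with 15 * 3 + 18 * 6 = 153 = 'C(18, 2) edges). Writing the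
    blocks as lists of naturals turns both properties into boolean tests that
    are decided by computation. *)
From mathcomp Require Import all_boot.

Set Implicit Arguments. Unset Strict Implicit. Unset Printing Implicit Defensive.

Section BlocksOfLists.

Variable v : nat.

Definition block_of (s : seq nat) : {set 'I_v} := [set x : 'I_v | val x \in s].

Definition proper_block (s : seq nat) : bool := uniq s && all (fun i => i < v) s.

Lemma card_block_of s : proper_block s -> #|block_of s| = size s.
Proof.
case/andP=> uniq_s /allP s_lt_v.
have -> : #|block_of s| = count (mem s) (iota 0 v).
  rewrite cardE /enum_mem size_filter -val_enum_ord enumT count_map.
  by apply: eq_count => x; rewrite /= inE.
rewrite -size_filter; apply/perm_size/uniq_perm => [|//|i].
  by rewrite filter_uniq ?iota_uniq.
rewrite mem_filter mem_iota add0n.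
by apply/and3P/idP => [[]|i_s] //; rewrite s_lt_v.
Qed.

Lemma mem2_block_of (x y : 'I_v) s :
  (x \in block_of s) && (y \in block_of s) = (val x \in s) && (val y \in s).
Proof. by rewrite !inE. Qed.

Definition pairs_covered_once (L : seq (seq nat)) : bool :=
  all (fun i => all (fun j =>
    (i == j) || (count (fun s => (i \in s) && (j \in s)) L == 1)) (iota 0 v))
    (iota 0 v).

Lemma K34_decomposition_of_lists (L : seq (seq nat)) :
  all (fun s => proper_block s && (size s \in [:: 3; 4])) L ->
  pairs_covered_once L ->
  is_K34_decomposition (map block_of L).
Proof.
move=> /allP blocksL /allP coverL; split.
  move=> _ /mapP [s sL ->]; have /andP [ps size34] := blocksL s sL.
  rewrite card_block_of //.
  by move: size34; rewrite !inE => /orP [] /eqP ->; [left | right].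
move=> x y neq_xy; rewrite count_map (eq_count (mem2_block_of x y)).
have iota_ord (z : 'I_v) : val z \in iota 0 v by rewrite mem_iota add0n ltn_ord.
move: (coverL _ (iota_ord x)) => /allP /(_ _ (iota_ord y)) /orP [/eqP/val_inj eq_xy|/eqP //].
by rewrite eq_xy eqxx in neq_xy.
Qed.

Lemma count_card_block_of (L : seq (seq nat)) n :
  all proper_block L ->
  count (fun b : {set 'I_v} => #|b| == n) (map block_of L) = count (fun s => size s == n) L.
Proof.
by move=> /allP pL; rewrite count_map; apply: eq_in_count => s /pL /card_block_of /= ->.
Qed.

End BlocksOfLists.

Definition design18 : seq (seq nat) :=
  [:: [:: 0; 16; 5; 9]; [:: 0; 7; 12; 13]; [:: 0; 2; 1; 14]; [:: 0; 8; 3];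
      [:: 0; 10; 11; 17]; [:: 0; 15; 4; 6]; [:: 1; 6; 8; 13]; [:: 1; 3; 5; 17];
      [:: 1; 15; 12; 16]; [:: 1; 10; 4]; [:: 1; 9; 7; 11]; [:: 5; 14; 10; 15];
      [:: 5; 4; 11; 13]; [:: 5; 12; 2; 6]; [:: 5; 8; 7]; [:: 6; 7; 10];
      [:: 6; 14; 17]; [:: 6; 9; 3]; [:: 6; 11; 16]; [:: 11; 14; 3; 12];
      [:: 11; 8; 2; 15]; [:: 12; 8; 4; 17]; [:: 12; 10; 9]; [:: 8; 9; 14];
      [:: 8; 16; 10]; [:: 10; 3; 2; 13]; [:: 3; 15; 7]; [:: 3; 16; 4];
      [:: 15; 17; 9; 13]; [:: 9; 2; 4]; [:: 4; 14; 7]; [:: 13; 16; 14];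
      [:: 2; 7; 16; 17]].

Lemma design18_proper :
  all (fun s => proper_block 18 s && (size s \in [:: 3; 4])) design18.
Proof. by vm_compute. Qed.

Lemma design18_pairs : pairs_covered_once 18 design18.
Proof. by vm_compute. Qed.

Theorem mainTheorem3 :
  D_le 18 33 /\
  exists B : seq {set 'I_18},
    is_K34_decomposition B /\ alpha B = 15 /\ beta B = 18.
Proof.
pose B := map (block_of 18) design18.
have decB : is_K34_decomposition B :=
  K34_decomposition_of_lists design18_proper design18_pairs.
have proper : all (proper_block 18) design18.
  by apply: sub_all design18_proper => s /andP [].
have alphaB : alpha B = 15 by rewrite /alpha count_card_block_of.
have betaB : beta B = 18 by rewrite /beta count_card_block_of.
by split; exists B; rewrite alphaB betaB.
Qed.
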